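(* Let $K$ be the uniform kernel, $K_\varepsilon(u)=\mathbb{I}(u<\varepsilon)$, assume $\Theta'\cap\Theta_1$ is not Lebesgue-null and that $\Theta_1\setminus\Theta'$ is a Lebesgue-null subset of $\Theta$. Define the stationary early rejection rates of ejMCMC and of OejMCMC by $$R_{ej}=1-\iiint\min\{1,\tilde\alpha[(\theta,x),\theta^*]\}\,q(\theta^*\mid\theta)\,\hat\pi_\varepsilon(\theta,x\mid y)\,dx\,d\theta^*\,d\theta,$$ $$R_{Oej}=1-\iiint\min\{1,\breve\alpha[(\theta,x),\theta^*]\}\,q(\theta^*\mid\theta)\,\pi_\varepsilon(\theta,x\mid y)\,dx\,d\theta^*\,d\theta.$$ Then $$R_{ej}-R_{Oej}\ge\int_{\Theta'\cap\Theta_1}\int_{\Theta\setminus\Theta'}\min\left\{1,\frac{\pi(\theta^* )q(\theta\mid\theta^* )}{\pi(\theta)q(\theta^*\mid\theta)}\right\}q(\theta^*\mid\theta)\,\pi_\varepsilon(\theta\mid y)\,d\theta^*\,d\theta\ \ (\ge 0).$$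
   Context: Setting: $\theta\in\Theta\subset\mathbb{R}^p$ with prior density $\pi$; data density $p(x\mid\theta)$; observed data $y$; discrepancy $\Delta(x,y)\ge0$; tolerance $\varepsilon>0$; proposal density $q(\theta^*\mid\theta)$; discrepancy-prediction function $h:\Theta\to\mathbb{R}$. ABC joint posterior $\pi_\varepsilon(\theta,x\mid y)\propto\pi(\theta)p(x\mid\theta)K_\varepsilon(\Delta(x,y))$ with marginal $\pi_\varepsilon(\theta\mid y)$; ejMCMC joint target $\hat\pi_\varepsilon(\theta,x\mid y)\propto\pi(\theta)p(x\mid\theta)\min\{K_\varepsilon(\Delta(x,y)),K_\varepsilon(h(\theta))\}$. $\Theta'=\{\theta:h(\theta)<\varepsilon\}$, $\Theta_1=\{\theta:\pi_\varepsilon(\theta\mid y)>0\}$. Early-rejection ratios: $$\breve\alpha[(\theta,x),\theta^*]=\frac{\pi(\theta^* )q(\theta\mid\theta^* )}{\pi(\theta)q(\theta^*\mid\theta)K_\varepsilon(\Delta(x,y))},\qquad \tilde\alpha[(\theta,x),\theta^*]=\frac{\pi(\theta^* )q(\theta\mid\theta^* )}{\pi(\theta)q(\theta^*\mid\theta)}\cdot\frac{K_\varepsilon(h(\theta^* ))}{\min\{K_\varepsilon(\Delta(x,y)),K_\varepsilon(h(\theta))\}}.$$ (OejMCMC rejects $\theta^*$ before simulating when a uniform $w$ exceeds $\breve\alpha$; ejMCMC when $w$ exceeds $\tilde\alpha$.) *)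

From HB Require Import structures.
From mathcomp Require Import all_boot all_order all_algebra.
From mathcomp Require Import all_classical all_reals all_analysis.
Set Implicit Arguments. Unset Strict Implicit. Unset Printing Implicit Defensive.
Import Order.TTheory GRing.Theory Num.Theory.
Local Open Scope classical_set_scope.
Local Open Scope ring_scope.

(* Conventions: [pi t] = pi(theta); [p t x] = p(x | theta);
   [q t ts] = q(theta* | theta) (so q(theta | theta* ) = [q ts t]);
   [Delta x] = Delta(x, y) for the fixed observed data y;
   [h t] = discrepancy prediction h(theta).  Real division by 0 is 0. *)

Section ABC.
Variables (R : realType) (dT dX : measure_display)
  (T : measurableType dT) (X : measurableType dX).
Variables (mu : {measure set T -> \bar R}) (nu : {measure set X -> \bar R}).
Variables (Th : set T) (pi : T -> R) (p : T -> X -> R) (q : T -> T -> R)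
  (Delta : X -> R) (h : T -> R) (eps : R).

Definition Kunif (u : R) : R := if u < eps then 1 else 0.

Definition abc_unnorm (t : T) (x : X) : R := pi t * p t x * Kunif (Delta x).
Definition abc_Z : R :=
  fine (\int[mu]_(t in Th) \int[nu]_x (abc_unnorm t x)%:E)%E.
Definition abc_joint (t : T) (x : X) : R := abc_unnorm t x / abc_Z.
Definition abc_marg (t : T) : \bar R := (\int[nu]_x (abc_joint t x)%:E)%E.

Definition ej_unnorm (t : T) (x : X) : R :=
  pi t * p t x * Num.min (Kunif (Delta x)) (Kunif (h t)).
Definition ej_Z : R :=
  fine (\int[mu]_(t in Th) \int[nu]_x (ej_unnorm t x)%:E)%E.
Definition ej_joint (t : T) (x : X) : R := ej_unnorm t x / ej_Z.

Definition Theta' : set T := [set t | Th t /\ h t < eps].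
Definition Theta1 : set T := [set t | Th t /\ (0 < abc_marg t)%E].

Definition mh_ratio (t ts : T) : R := (pi ts * q ts t) / (pi t * q t ts).

Definition alpha_breve (t : T) (x : X) (ts : T) : R :=
  (pi ts * q ts t) / (pi t * q t ts * Kunif (Delta x)).
Definition alpha_tilde (t : T) (x : X) (ts : T) : R :=
  mh_ratio t ts * (Kunif (h ts) / Num.min (Kunif (Delta x)) (Kunif (h t))).

Definition R_ej : \bar R :=
  (1 - \int[mu]_(t in Th) \int[mu]_(ts in Th) \int[nu]_x
        (Num.min 1 (alpha_tilde t x ts) * q t ts * ej_joint t x)%:E)%E.
Definition R_Oej : \bar R :=
  (1 - \int[mu]_(t in Th) \int[mu]_(ts in Th) \int[nu]_x
        (Num.min 1 (alpha_breve t x ts) * q t ts * abc_joint t x)%:E)%E.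

Definition lower_bound : \bar R :=
  (\int[mu]_(t in Theta' `&` Theta1) \int[mu]_(ts in Th `\` Theta')
     ((Num.min 1 (mh_ratio t ts) * q t ts)%:E * abc_marg t))%E.

End ABC.

(* The uniform kernel only takes the values 0 and 1, so the ejMCMC target is
   pi_eps(theta, x | y) I(h(theta) < eps) up to normalisation, and its normalising
   constant is that of the ABC posterior because pi_eps(. | y) gives no mass to
   Theta_1 \ Theta'.  Pointwise, the ejMCMC acceptance integrand plus
   I(theta in Theta', theta* notin Theta') min{1, MH ratio} q(theta* | theta)
   pi_eps(theta, x | y) is at most the OejMCMC acceptance integrand.  Integrating
   gives the bound; the ejMCMC acceptance integral is at most 1/Z, hence finite,
   so the two rates can be subtracted. *)

From Pilot Require Import Defs.
From HB Require Import structures.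
From mathcomp Require Import all_boot all_order all_algebra.
From mathcomp Require Import all_classical all_reals all_analysis.
From mathcomp Require Import ring lra.
Import Order.TTheory GRing.Theory Num.Theory.
Local Open Scope classical_set_scope.
Local Open Scope ring_scope.

Lemma ge_ereal_supD (R : realType) (A B : set (\bar R)) (s : \bar R) :
  A 0%E -> B 0%E -> (forall a b, A a -> B b -> a + b <= s)%E ->
  (ereal_sup A + ereal_sup B <= s)%E.
Proof.
move=> A0 B0 ABs.
have supA_add b : B b -> (ereal_sup A + b <= s)%E.
  move=> Bb; have := ABs 0%E b A0 Bb; case: b Bb => [r| |] Bb.
  - move=> _; rewrite -leeBrDr//; apply: ge_ereal_sup => a Aa.
    by rewrite leeBrDr//; exact: ABs.
  - by rewrite add0e leye_eq => /eqP ->; rewrite leey.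
  - by move=> _; rewrite addeNy leNye.
have supA_ge0 : (0 <= ereal_sup A)%E by exact: ereal_sup_ubound.
case E: (ereal_sup A) supA_ge0 (supA_add 0%E B0) => [r| |] // _.
- move=> _; rewrite addeC -leeBrDr//; apply: ge_ereal_sup => b Bb.
  by rewrite leeBrDr// addeC -E; exact: supA_add.
- by rewrite adde0 leye_eq => /eqP ->; rewrite leey.
Qed.

(* The integral of a nonnegative function is the supremum of the integrals of its
   simple minorants, so the following hold without measurability; the iterated
   integrands below are never shown to be measurable. *)
Section ge0_integral_nonmeasurable.
Local Open Scope ereal_scope.
Context d (T : measurableType d) (R : realType) (mu : {measure set T -> \bar R}).
Implicit Types (D : set T) (f g k : T -> \bar R).
Import HBNNSimple.

Lemma sintegral_proj_null (s : {nnsfun T >-> R}) {N} (mN : measurable N) :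
  mu N = 0 -> sintegral mu (proj_nnsfun s mN) = 0.
Proof.
move=> N0; rewrite sintegralE fsbig1// => r _.
have [->|r0] := eqVneq r 0%R; first by rewrite mul0e.
suff -> : mu (proj_nnsfun s mN @^-1` [set r]) = 0 by rewrite mule0.
apply/eqP; rewrite -measure_le0 -N0 le_measure ?inE//.
move=> x /=; rewrite /preimage/= measurable_realfun.mindicE.
case: (x \in N) /boolP => [/set_mem //|_].
by rewrite mulr0 => /esym/eqP; rewrite (negbTE r0).
Qed.

Lemma ae_ge0_le_integral_nonmeas {D f g} :
  (forall x, D x -> 0 <= f x) -> (forall x, D x -> 0 <= g x) ->
  {ae mu, forall x, D x -> f x <= g x} ->
  \int[mu]_(x in D) f x <= \int[mu]_(x in D) g x.
Proof.
move=> f0 g0 [N [mN N0 fgN]].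
rewrite (ge0_integralE _ f0) (ge0_integralE _ g0).
apply: ge_ereal_sup => _ [s /= sf <-].
have mNC : measurable (~` N) by exact: measurableC.
have s_split : sintegral mu s =
    sintegral mu (proj_nnsfun s mNC) + sintegral mu (proj_nnsfun s mN).
  rewrite -sintegralD; apply: eq_sintegral => x /=.
  rewrite !measurable_realfun.mindicE; case: (x \in N) /boolP => xN.
    have -> : (x \in ~` N) = false.
      by apply/negbTE/negP => /set_mem; apply; exact/set_mem.
    by rewrite mulr0 add0r mulr1.
  have -> : (x \in ~` N) = true.
    by apply/mem_set => Nx; apply: (negP xN); exact/mem_set.
  by rewrite mulr0 addr0 mulr1.
rewrite s_split (sintegral_proj_null s mN N0) adde0.
apply: ereal_sup_ubound; exists (proj_nnsfun s mNC) => // x /=.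
rewrite measurable_realfun.mindicE; case: (x \in ~` N) /boolP => xN; last first.
  by rewrite mulr0 erestrict_ge0.
rewrite mulr1; apply: le_trans (sf x) _; rewrite !patchE.
case: ifPn => // /set_mem Dx; have [//|/negP fg] := boolP (f x <= g x).
move/set_mem: xN => nNx; exfalso; apply/nNx/fgN => /(_ Dx); exact: fg.
Qed.

Lemma ge0_le_integral_nonmeas {D f g} :
  (forall x, D x -> 0 <= f x) -> (forall x, D x -> f x <= g x) ->
  \int[mu]_(x in D) f x <= \int[mu]_(x in D) g x.
Proof.
move=> f0 fg; apply: ae_ge0_le_integral_nonmeas => //; last exact: aeW.
by move=> x Dx; exact: le_trans (f0 _ Dx) (fg _ Dx).
Qed.

Lemma ge0_le_integral_subset_nonmeas {A D f g} : A `<=` D ->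
  (forall x, A x -> 0 <= f x) -> (forall x, D x -> 0 <= g x) ->
  (forall x, A x -> f x <= g x) ->
  \int[mu]_(x in A) f x <= \int[mu]_(x in D) g x.
Proof.
move=> AD f0 g0 fg; rewrite integral_mkcond [leRHS]integral_mkcond.
apply: ge0_le_integral_nonmeas => x _; first exact: erestrict_ge0.
rewrite !patchE; case: ifPn => [/set_mem Ax|_].
  by rewrite mem_set ?fg//; exact: AD.
by case: ifPn => // /set_mem Dx; exact: g0.
Qed.

Lemma ge0_integralD_le_nonmeas {D f g k} :
  (forall x, D x -> 0 <= f x) -> (forall x, D x -> 0 <= g x) ->
  (forall x, D x -> f x + g x <= k x) ->
  \int[mu]_(x in D) f x + \int[mu]_(x in D) g x <= \int[mu]_(x in D) k x.
Proof.
move=> f0 g0 fgk; have fg0 x : D x -> 0 <= f x + g x.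
  by move=> Dx; rewrite adde_ge0 ?f0 ?g0.
apply: le_trans (ge0_le_integral_nonmeas fg0 fgk).
rewrite (ge0_integralE _ f0) (ge0_integralE _ g0) (ge0_integralE _ fg0).
have sintegrals_has0 h : (forall x, 0 <= h x) ->
    [set sintegral mu s | s in [set s : {nnsfun T >-> R} |
      forall x, (s x)%:E <= h x]] 0.
  by move=> h0; exists nnsfun0 => //; exact: sintegral0.
apply: ge_ereal_supD; [exact/sintegrals_has0/erestrict_ge0|
                       exact/sintegrals_has0/erestrict_ge0|].
move=> _ _ [s1 /= s1f <-] [s2 /= s2g <-].
rewrite -sintegralD; apply: ereal_sup_ubound; exists (add_nnsfun s1 s2) => //.
move=> x /=; rewrite EFinD; apply: le_trans (leeD (s1f x) (s2g x)) _.
by rewrite !patchE; case: ifP => //; rewrite adde0.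
Qed.

Lemma ge0_integralZl_nonmeas {D f} (r : R) : (0 <= r)%R ->
  (forall x, D x -> 0 <= f x) ->
  \int[mu]_(x in D) (r%:E * f x) = r%:E * \int[mu]_(x in D) f x.
Proof.
move=> r0 f0; have [->|rneq0] := eqVneq r 0%R.
  by rewrite mul0e; under eq_integral do rewrite mul0e; rewrite integral0.
have r_gt0 : (0 < r)%R by rewrite lt0r rneq0.
suff Zl_ge (k : R) F : (0 < k)%R -> (forall x, D x -> 0 <= F x) ->
    k%:E * \int[mu]_(x in D) F x <= \int[mu]_(x in D) (k%:E * F x).
  have rf0 x : D x -> 0 <= r%:E * f x by move=> Dx; rewrite mule_ge0 ?f0.
  apply/eqP; rewrite eq_le Zl_ge// andbT.
  have rV_gt0 : (0 < r^-1)%R by rewrite invr_gt0.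
  have := Zl_ge _ _ rV_gt0 rf0.
  under [X in _ <= X -> _]eq_integral do rewrite muleA -EFinM mulVf// mul1e.
  by rewrite lee_pdivrMl.
move=> k_gt0 F0; have kF0 x : D x -> 0 <= k%:E * F x.
  by move=> Dx; rewrite mule_ge0 ?F0// lee_fin ltW.
rewrite (ge0_integralE _ F0) (ge0_integralE _ kF0) -ereal_sup_pZl//.
apply: ge_ereal_sup => _ [_ [s /= sF <-] <-].
rewrite -sintegralrM; apply: ereal_sup_ubound.
exists (scale_nnsfun s (ltW k_gt0)) => // x /=; rewrite EFinM.
apply: le_trans (lee_pmul _ _ (lexx _) (sF x)) _.
- by rewrite lee_fin ltW.
- by rewrite lee_fin fun_ge0.
- by rewrite !patchE; case: ifP => //; rewrite mule0.
Qed.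

End ge0_integral_nonmeasurable.

Lemma iterated_integralD_le_nonmeas d1 d2 (T : measurableType d1)
    (X : measurableType d2) (R : realType) (mu : {measure set T -> \bar R})
    (nu : {measure set X -> \bar R}) (D : set T) (F G H : T -> T -> X -> \bar R) :
  (forall t ts x, D t -> D ts -> 0 <= F t ts x)%E ->
  (forall t ts x, D t -> D ts -> 0 <= G t ts x)%E ->
  (forall t ts x, D t -> D ts -> F t ts x + G t ts x <= H t ts x)%E ->
  (\int[mu]_(t in D) \int[mu]_(ts in D) \int[nu]_x F t ts x +
   \int[mu]_(t in D) \int[mu]_(ts in D) \int[nu]_x G t ts x <=
   \int[mu]_(t in D) \int[mu]_(ts in D) \int[nu]_x H t ts x)%E.
Proof.
move=> F0 G0 FGH.
apply: ge0_integralD_le_nonmeas => [t Dt|t Dt|t Dt].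
- by apply: integral_ge0 => ts Dts; apply: integral_ge0 => x _; exact: F0.
- by apply: integral_ge0 => ts Dts; apply: integral_ge0 => x _; exact: G0.
apply: ge0_integralD_le_nonmeas => [ts Dts|ts Dts|ts Dts].
- by apply: integral_ge0 => x _; exact: F0.
- by apply: integral_ge0 => x _; exact: G0.
by apply: ge0_integralD_le_nonmeas => x _; [exact: F0|exact: G0|exact: FGH].
Qed.

Lemma adde_le_subeB (R : realType) (r : R) (a b l : \bar R) :
  b \is a fin_num -> (b + l <= a)%E -> (l <= (r%:E - b) - (r%:E - a))%E.
Proof.
case: b => [b _| |]//.
case: a => [a| |]; case: l => [l| |] //=; rewrite ?leey ?leNye//.
by rewrite -EFinD !lee_fin; lra.
Qed.

Lemma Kunif_ge0 {R : realType} (eps u : R) : 0 <= Kunif eps u.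
Proof. by rewrite /Kunif; case: ifP. Qed.

Lemma Kunif_le1 {R : realType} (eps u : R) : Kunif eps u <= 1.
Proof. by rewrite /Kunif; case: ifP. Qed.

Lemma Kunif1 {R : realType} {eps u : R} : u < eps -> Kunif eps u = 1.
Proof. by rewrite /Kunif => ->. Qed.

Lemma Kunif0 {R : realType} {eps u : R} : eps <= u -> Kunif eps u = 0.
Proof. by rewrite /Kunif ltNge => ->. Qed.

Section abc_early_rejection.
Variables (R : realType) (dT dX : measure_display)
  (T : measurableType dT) (X : measurableType dX).
Variables (mu : {measure set T -> \bar R}) (nu : {measure set X -> \bar R}).
Variables (Th : set T) (pi : T -> R) (p : T -> X -> R) (q : T -> T -> R)
  (Delta : X -> R) (h : T -> R) (eps : R).
Hypothesis pi_ge0 : forall t, Th t -> 0 <= pi t.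
Hypothesis pi_int1 : (\int[mu]_(t in Th) (pi t)%:E = 1)%E.
Hypothesis p_ge0 : forall t x, Th t -> 0 <= p t x.
Hypothesis p_int1 : forall t, Th t -> (\int[nu]_x (p t x)%:E = 1)%E.
Hypothesis q_ge0 : forall t ts, Th t -> Th ts -> 0 <= q t ts.
Hypothesis q_int1 : forall t, Th t -> (\int[mu]_(ts in Th) (q t ts)%:E = 1)%E.

Local Notation K := (Kunif eps).
Local Notation J := (abc_unnorm pi p Delta eps).
Local Notation Z := (abc_Z mu nu Th pi p Delta eps).
Local Notation abc_joint := (abc_joint mu nu Th pi p Delta eps).
Local Notation abc_marg := (abc_marg mu nu Th pi p Delta eps).
Local Notation ej_joint := (ej_joint mu nu Th pi p Delta h eps).
Local Notation Theta' := (Theta' Th h eps).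
Local Notation Theta1 := (Theta1 mu nu Th pi p Delta eps).
Local Notation mh_ratio := (mh_ratio pi q).

Definition abc_marg_unnorm t : \bar R := (\int[nu]_x (J t x)%:E)%E.
Local Notation g := abc_marg_unnorm.

Lemma abc_unnorm_ge0 t x : Th t -> 0 <= J t x.
Proof. by move=> Tt; rewrite !mulr_ge0 ?pi_ge0 ?p_ge0 ?Kunif_ge0. Qed.

Lemma abc_marg_unnorm_ge0 t : Th t -> (0 <= g t)%E.
Proof. by move=> Tt; apply: integral_ge0 => x _; rewrite lee_fin abc_unnorm_ge0. Qed.

Lemma abc_marg_unnorm_le_prior t : Th t -> (g t <= (pi t)%:E)%E.
Proof.
move=> Tt; rewrite -[(pi t)%:E]mule1 -(p_int1 _ Tt).
rewrite -ge0_integralZl_nonmeas ?pi_ge0//; last by move=> x _; rewrite lee_fin p_ge0.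
apply: ge0_le_integral_nonmeas => x _; first by rewrite lee_fin abc_unnorm_ge0.
by rewrite -EFinM lee_fin ler_piMr ?mulr_ge0 ?pi_ge0 ?p_ge0 ?Kunif_le1.
Qed.

Lemma abc_ZE : (\int[mu]_(t in Th) g t = Z%:E)%E.
Proof.
have int_le1 : (\int[mu]_(t in Th) g t <= 1)%E.
  rewrite -pi_int1; apply: ge0_le_integral_nonmeas => t Tt.
    exact: abc_marg_unnorm_ge0.
  exact: abc_marg_unnorm_le_prior.
rewrite /abc_Z fineK// ge0_fin_numE ?(le_lt_trans int_le1) ?ltry//.
by apply: integral_ge0 => t; exact: abc_marg_unnorm_ge0.
Qed.

Lemma abc_Z_ge0 : 0 <= Z.
Proof.
by rewrite -lee_fin -abc_ZE integral_ge0// => t; exact: abc_marg_unnorm_ge0.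
Qed.

Lemma abc_margE t : Th t -> abc_marg t = ((Z^-1)%:E * g t)%E.
Proof.
move=> Tt; rewrite /abc_marg -ge0_integralZl_nonmeas ?invr_ge0 ?abc_Z_ge0//.
  by apply: eq_integral => x _; rewrite -EFinM mulrC.
by move=> x _; rewrite lee_fin abc_unnorm_ge0.
Qed.

(* [x / 0 = 0], so [Z = 0] makes every [abc_marg t] vanish. *)
Lemma abc_Z_gt0 : ~ mu.-negligible Theta1 -> 0 < Z.
Proof.
move=> Theta1_nonnull; rewrite lt0r abc_Z_ge0 andbT; apply/eqP => Z0.
apply: Theta1_nonnull; suff -> : Theta1 = set0 by exact: negligible_set0.
apply/seteqP; split=> // t [_]; rewrite /abc_marg /Defs.abc_joint Z0.
by under eq_integral do rewrite invr0 mulr0; rewrite integral0 ltxx.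
Qed.

Lemma ej_unnormE t x : ej_unnorm pi p Delta h eps t x = K (h t) * J t x.
Proof.
rewrite /ej_unnorm /abc_unnorm /Kunif.
by case: ifP; case: ifP; rewrite ?minxx ?(min_l ler01) ?(min_r ler01); lra.
Qed.

Lemma abc_joint_ge0 t x : Th t -> 0 <= abc_joint t x.
Proof. by move=> Tt; rewrite divr_ge0 ?abc_unnorm_ge0 ?abc_Z_ge0. Qed.

Lemma abc_marg_ge0 t : Th t -> (0 <= abc_marg t)%E.
Proof. by move=> Tt; apply: integral_ge0 => x _; rewrite lee_fin abc_joint_ge0. Qed.

Lemma mh_ratio_ge0 t ts : Th t -> Th ts -> 0 <= mh_ratio t ts.
Proof. by move=> Tt Tts; rewrite divr_ge0 ?mulr_ge0 ?pi_ge0 ?q_ge0. Qed.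

Lemma min_mh_ratio_ge0 t ts : Th t -> Th ts -> 0 <= Num.min 1 (mh_ratio t ts).
Proof. by move=> Tt Tts; rewrite le_min ler01 mh_ratio_ge0. Qed.

Definition Oej_integrand t ts x :=
  Num.min 1 (alpha_breve pi q Delta eps t x ts) * q t ts * abc_joint t x.
Definition ej_integrand t ts x :=
  Num.min 1 (alpha_tilde pi q Delta h eps t x ts) * q t ts * ej_joint t x.
Definition rejection_gap t ts x :=
  K (h t) * (1 - K (h ts)) * Num.min 1 (mh_ratio t ts) * q t ts * abc_joint t x.

Lemma R_ejE : R_ej mu nu Th pi p q Delta h eps =
  (1 - \int[mu]_(t in Th) \int[mu]_(ts in Th) \int[nu]_x (ej_integrand t ts x)%:E)%E.
Proof. by []. Qed.

Lemma R_OejE : R_Oej mu nu Th pi p q Delta eps =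
  (1 - \int[mu]_(t in Th) \int[mu]_(ts in Th) \int[nu]_x (Oej_integrand t ts x)%:E)%E.
Proof. by []. Qed.

Lemma rejection_gap_ge0 t ts x : Th t -> Th ts -> 0 <= rejection_gap t ts x.
Proof.
move=> Tt Tts; rewrite mulr_ge0 ?abc_joint_ge0// !mulr_ge0 ?Kunif_ge0 ?q_ge0//.
  by rewrite subr_ge0 Kunif_le1.
exact: min_mh_ratio_ge0.
Qed.

Lemma lower_bound_ge0 : (0 <= lower_bound mu nu Th pi p q Delta h eps)%E.
Proof.
apply: integral_ge0 => t [[Tt _] _]; apply: integral_ge0 => ts [Tts _].
by rewrite mule_ge0 ?abc_marg_ge0// lee_fin mulr_ge0 ?min_mh_ratio_ge0 ?q_ge0.
Qed.

Hypothesis Z_gt0 : 0 < Z.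
Hypothesis Theta1_off_Theta'_null : mu.-negligible (Theta1 `\` Theta').

Lemma ej_marg_unnormE t : Th t ->
  (\int[nu]_x (ej_unnorm pi p Delta h eps t x)%:E = (K (h t))%:E * g t)%E.
Proof.
move=> Tt; rewrite -ge0_integralZl_nonmeas ?Kunif_ge0//.
  by apply: eq_integral => x _; rewrite ej_unnormE EFinM.
by move=> x _; rewrite lee_fin abc_unnorm_ge0.
Qed.

Lemma integral_Kunif_abc_marg_unnorm :
  (\int[mu]_(t in Th) ((K (h t))%:E * g t) = \int[mu]_(t in Th) g t)%E.
Proof.
have Kg_ge0 t : Th t -> (0 <= (K (h t))%:E * g t)%E.
  by move=> Tt; rewrite mule_ge0 ?lee_fin ?Kunif_ge0 ?abc_marg_unnorm_ge0.
apply/eqP; rewrite eq_le; apply/andP; split.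
  apply: ge0_le_integral_nonmeas => // t Tt; have := abc_marg_unnorm_ge0 _ Tt.
  by rewrite /Kunif; case: ifP; rewrite ?mul1e ?mul0e.
apply: ae_ge0_le_integral_nonmeas => //; first exact: abc_marg_unnorm_ge0.
case: Theta1_off_Theta'_null => N [mN N0 Theta1_N]; exists N; split => // t /=.
move=> /not_implyP[Tt]; have [ht|ht] := ltP (h t) eps.
  by rewrite Kunif1// mul1e lexx.
rewrite Kunif0// mul0e => /negP; rewrite -ltNge => g_gt0; apply: Theta1_N.
split; first by split => //; rewrite abc_margE// mule_gt0// lte_fin invr_gt0.
by case=> _; apply/negP; rewrite -leNgt.
Qed.

Lemma ej_ZE : ej_Z mu nu Th pi p Delta h eps = Z.
Proof.
rewrite /ej_Z (eq_integral (fun t => (K (h t))%:E * g t)%E); last first.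
  by move=> t /[!inE]; exact: ej_marg_unnormE.
by rewrite integral_Kunif_abc_marg_unnorm abc_ZE.
Qed.

Lemma ej_jointE t x : ej_joint t x = K (h t) * abc_joint t x.
Proof. by rewrite /Defs.ej_joint ej_ZE ej_unnormE -mulrA. Qed.

Lemma ej_integrand_ge0 t ts x : Th t -> Th ts -> 0 <= ej_integrand t ts x.
Proof.
move=> Tt Tts; rewrite /ej_integrand ej_jointE.
move: (abc_joint t x) (abc_joint_ge0 t x Tt) => a a_ge0.
rewrite !mulr_ge0 ?Kunif_ge0 ?q_ge0// le_min ler01 /alpha_tilde.
by rewrite mulr_ge0 ?mh_ratio_ge0// divr_ge0 ?Kunif_ge0// le_min !Kunif_ge0.
Qed.

Lemma ej_integrand_add_gap_le t ts x : Th t -> Th ts ->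
  ej_integrand t ts x + rejection_gap t ts x <= Oej_integrand t ts x.
Proof.
move=> Tt Tts; rewrite /ej_integrand /rejection_gap /Oej_integrand ej_jointE.
rewrite /alpha_breve /alpha_tilde.
have [Dx|Dx] := ltP (Delta x) eps; last first.
  have -> : abc_joint t x = 0.
    by rewrite /Defs.abc_joint /abc_unnorm Kunif0// mulr0 mul0r.
  by rewrite !mulr0 addr0.
rewrite (Kunif1 Dx) (mulr1 (pi t * q t ts)) -/(mh_ratio t ts).
move: (abc_joint t x) (abc_joint_ge0 t x Tt) => a a_ge0.
have m_ge0 := min_mh_ratio_ge0 t ts Tt Tts; have q_ge0' := q_ge0 t ts Tt Tts.
have [ht|ht] := ltP (h t) eps; last first.
  rewrite (Kunif0 ht) !mul0r mulr0 add0r.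
  by rewrite !mulr_ge0.
rewrite (Kunif1 ht) minxx divr1 !mul1r.
have [hts|hts] := ltP (h ts) eps.
  by rewrite (Kunif1 hts) mulr1 subrr !mul0r addr0.
by rewrite (Kunif0 hts) mulr0 (min_r ler01) !mul0r add0r subr0 mul1r.
Qed.

Lemma lower_bound_le_gap : (lower_bound mu nu Th pi p q Delta h eps <=
  \int[mu]_(t in Th) \int[mu]_(ts in Th) \int[nu]_x (rejection_gap t ts x)%:E)%E.
Proof.
have gap_int_ge0 t ts : Th t -> Th ts ->
    (0 <= \int[nu]_x (rejection_gap t ts x)%:E)%E.
  by move=> Tt Tts; apply: integral_ge0 => x _; rewrite lee_fin rejection_gap_ge0.
apply: ge0_le_integral_subset_nonmeas => [t [[]]//|t [[Tt _] _]|t Tt|t [[Tt ht] _]].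
- apply: integral_ge0 => ts [Tts _].
  by rewrite mule_ge0 ?abc_marg_ge0// lee_fin mulr_ge0 ?min_mh_ratio_ge0 ?q_ge0.
- by apply: integral_ge0 => ts Tts; exact: gap_int_ge0.
apply: ge0_le_integral_subset_nonmeas => [ts []//|ts [Tts _]|ts Tts|ts [Tts hts]].
- by rewrite mule_ge0 ?abc_marg_ge0// lee_fin mulr_ge0 ?min_mh_ratio_ge0 ?q_ge0.
- exact: gap_int_ge0.
have {}hts : eps <= h ts by rewrite leNgt; apply/negP => lt_hts; exact: hts.
rewrite /abc_marg -ge0_integralZl_nonmeas; last 2 first.
- by rewrite mulr_ge0 ?min_mh_ratio_ge0 ?q_ge0.
- by move=> x _; rewrite lee_fin abc_joint_ge0.
apply: ge0_le_integral_nonmeas => x _.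
  by rewrite mule_ge0// lee_fin ?abc_joint_ge0// mulr_ge0 ?min_mh_ratio_ge0 ?q_ge0.
by rewrite /rejection_gap Kunif1// Kunif0// subr0 !mul1r -EFinM.
Qed.

Lemma ej_integrand_le t ts x : Th t -> Th ts ->
  ej_integrand t ts x <= q t ts * pi t / Z * p t x.
Proof.
move=> Tt Tts; rewrite /ej_integrand ej_jointE.
have joint_le : K (h t) * abc_joint t x <= pi t * p t x / Z.
  apply: le_trans (ler_piMl (abc_joint_ge0 t x Tt) (Kunif_le1 _ _)) _.
  rewrite /Defs.abc_joint /abc_unnorm ler_wpM2r ?invr_ge0 ?abc_Z_ge0//.
  by rewrite ler_piMr ?mulr_ge0 ?pi_ge0 ?p_ge0 ?Kunif_le1.
rewrite -mulrA; apply: le_trans (ler_piMl _ _) _.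
- by rewrite mulr_ge0 ?q_ge0// mulr_ge0 ?Kunif_ge0 ?abc_joint_ge0.
- by rewrite ge_min lexx.
have -> : q t ts * pi t / Z * p t x = q t ts * (pi t * p t x / Z) by ring.
by rewrite ler_wpM2l ?q_ge0.
Qed.

Lemma ej_accept_le :
  (\int[mu]_(t in Th) \int[mu]_(ts in Th) \int[nu]_x (ej_integrand t ts x)%:E
     <= (Z^-1)%:E)%E.
Proof.
have Zinv_ge0 : 0 <= Z^-1 by rewrite invr_ge0 abc_Z_ge0.
have ej_ge0 t ts x : Th t -> Th ts -> (0 <= (ej_integrand t ts x)%:E)%E.
  by move=> Tt Tts; rewrite lee_fin ej_integrand_ge0.
rewrite -[(Z^-1)%:E]mule1 -pi_int1 -ge0_integralZl_nonmeas; last 2 first.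
- exact: Zinv_ge0.
- by move=> t Tt; rewrite lee_fin pi_ge0.
apply: ge0_le_integral_nonmeas => t Tt.
  by apply: integral_ge0 => ts Tts; apply: integral_ge0 => x _; exact: ej_ge0.
rewrite -EFinM mulrC -[_%:E]mule1 -(q_int1 _ Tt) -ge0_integralZl_nonmeas; last 2 first.
- by rewrite divr_ge0 ?pi_ge0 ?abc_Z_ge0.
- by move=> ts Tts; rewrite lee_fin q_ge0.
apply: ge0_le_integral_nonmeas => ts Tts.
  by apply: integral_ge0 => x _; exact: ej_ge0.
rewrite -EFinM mulrC -[_%:E]mule1 -(p_int1 _ Tt) -ge0_integralZl_nonmeas; last 2 first.
- by rewrite !mulr_ge0 ?q_ge0 ?pi_ge0.
- by move=> x _; rewrite lee_fin p_ge0.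
apply: ge0_le_integral_nonmeas => x _; first exact: ej_ge0.
rewrite -EFinM lee_fin.
have -> : Z^-1 * pi t * q t ts * p t x = q t ts * pi t / Z * p t x by ring.
exact: ej_integrand_le.
Qed.

Lemma ej_accept_fin_num :
  (\int[mu]_(t in Th) \int[mu]_(ts in Th) \int[nu]_x (ej_integrand t ts x)%:E)%E
    \is a fin_num.
Proof.
rewrite ge0_fin_numE ?(le_lt_trans ej_accept_le) ?ltry//.
apply: integral_ge0 => t Tt; apply: integral_ge0 => ts Tts.
by apply: integral_ge0 => x _; rewrite lee_fin ej_integrand_ge0.
Qed.

End abc_early_rejection.

Theorem proposition3 (R : realType) (dT dX : measure_display)
  (T : measurableType dT) (X : measurableType dX)
  (mu : {measure set T -> \bar R}) (nu : {measure set X -> \bar R})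
  (Th : set T) (pi : T -> R) (p : T -> X -> R) (q : T -> T -> R)
  (Delta : X -> R) (h : T -> R) (eps : R) :
  sigma_finite setT mu -> sigma_finite setT nu ->
  measurable Th ->
  0 < eps ->
  (* prior density on Theta *)
  (forall t, Th t -> 0 <= pi t) -> measurable_fun Th pi ->
  (\int[mu]_(t in Th) (pi t)%:E = 1)%E ->
  (* data density p(x | theta) *)
  (forall t x, Th t -> 0 <= p t x) ->
  measurable_fun (Th `*` setT) (fun z : T * X => p z.1 z.2) ->
  (forall t, Th t -> (\int[nu]_x (p t x)%:E = 1)%E) ->
  (* proposal density q(theta* | theta) *)
  (forall t ts, Th t -> Th ts -> 0 <= q t ts) ->
  measurable_fun (Th `*` Th) (fun z : T * T => q z.1 z.2) ->
  (forall t, Th t -> (\int[mu]_(ts in Th) (q t ts)%:E = 1)%E) ->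
  (* discrepancy and its prediction *)
  (forall x, 0 <= Delta x) -> measurable_fun setT Delta ->
  measurable_fun Th h ->
  (* assumptions of the proposition *)
  ~ mu.-negligible (Theta' Th h eps `&` Theta1 mu nu Th pi p Delta eps) ->
  mu.-negligible (Theta1 mu nu Th pi p Delta eps `\` Theta' Th h eps) ->
  (R_ej mu nu Th pi p q Delta h eps - R_Oej mu nu Th pi p q Delta eps
     >= lower_bound mu nu Th pi p q Delta h eps)%E
  /\ (lower_bound mu nu Th pi p q Delta h eps >= 0)%E.
Proof.
move=> _ _ _ _ pi_ge0 _ pi_int1 p_ge0 _ p_int1 q_ge0 _ q_int1 _ _ _
  Theta'_Theta1_nonnull Theta1_off_Theta'_null.
have Z_gt0 : 0 < abc_Z mu nu Th pi p Delta eps.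
  apply: abc_Z_gt0 => // Theta1_null; apply: Theta'_Theta1_nonnull.
  exact: negligibleS Theta1_null.
split; last by apply: lower_bound_ge0.
rewrite R_ejE R_OejE; apply: adde_le_subeB; first by apply: ej_accept_fin_num.
apply: le_trans (leeD (lexx _) _) _; first by apply: lower_bound_le_gap.
apply: iterated_integralD_le_nonmeas => t ts x Tt Tts.
- by rewrite lee_fin ej_integrand_ge0.
- by rewrite lee_fin rejection_gap_ge0.
- by rewrite -EFinD lee_fin ej_integrand_add_gap_le.
Qed.
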